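(* Fix $\alpha\in\mathbb C$ with $|\alpha|\le1$ and let $\mathcal H$, $N_\alpha$, $T_z$, $A_\alpha$, $B=0$, $P$ be as follows: $\mathcal H=\ell^2(\mathbb C^2)^{\oplus 4}$, $N_\alpha(c_0,c_1,\dots)=(H_1c_0,0,0,\dots)$ with $H_1=\begin{pmatrix}0&\alpha\\0&0\end{pmatrix}$, $A_\alpha(x_1,x_2,x_3,x_4)=(0,0,N_\alpha x_3,0)$, $P(x_1,x_2,x_3,x_4)=(0,0,T_zx_2,x_1)$. Then $D_{P^*}=(I-PP^* )^{1/2}$ is the orthogonal projection $I\oplus I\oplus(I-T_zT_z^* )\oplus 0$ onto $\mathcal D_{P^*}=\ell^2(\mathbb C^2)\oplus\ell^2(\mathbb C^2)\oplus\ker T_z^*\oplus\{0\}$. Let $G_1\in\mathcal B(\mathcal D_{P^*})$ be $G_1(x_1,x_2,x_3,0)=(0,0,N_\alpha^*x_3,0)$ and $G_2=0$. Then $A_\alpha^*-BP^*=D_{P^*}G_1D_{P^*}$ and $B^*-A_\alpha P^*=D_{P^*}G_2D_{P^*}$. Moreover, on $\mathcal K'=\mathcal H\oplus\mathcal D_{P^*}\oplus\mathcal D_{P^*}\oplus\cdots$ the operators $$W_1(h,d_1,d_2,\dots)=(A_\alpha^*h,\;G_1^*D_{P^*}h+G_1d_1,\;G_1^*d_1+G_1d_2,\;G_1^*d_2+G_1d_3,\dots),$$ $$W_2(h,d_1,d_2,\dots)=(B^*h,\;G_1D_{P^*}h,\;G_1^*D_{P^*}h+G_1d_1,\;G_1^*d_1+G_1d_2,\dots),$$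 $$W_3(h,d_1,d_2,\dots)=(P^*h,\;0,\;D_{P^*}h,\;d_1,\;d_2,\dots)$$ form a tetrablock isometric dilation of $(A_\alpha^*,B^*,P^* )$.
   Context: $\ell^2(\mathbb C^2)=\mathbb C^2\oplus\mathbb C^2\oplus\cdots$ and $T_z(e_0,e_1,\dots)=(0,e_0,e_1,\dots)$. The closed tetrablock is $\overline{\mathbb E}=\{(a_{11},a_{22},\det M): M=(a_{ij})\in\mathbb M_2(\mathbb C),\ \|M\|\le1\}$ and $b\mathbb E=\{(a_{11},a_{22},\det M): M\text{ unitary}\}$. A tetrablock unitary is a commuting triple of normal operators with Taylor joint spectrum in $b\mathbb E$; a tetrablock isometry is the restriction of a tetrablock unitary to a joint invariant subspace. It is known that a commuting triple $(V_1,V_2,V_3)$ is a tetrablock isometry iff $V_3$ is an isometry, $\|V_1\|\le1$, $\|V_2\|\le1$ and $V_1=V_2^*V_3$. A tetrablock isometric dilation of a commuting triple $(X,Y,Z)$ on $\mathcal H$ is a tetrablock isometry $(W_1,W_2,W_3)$ on a Hilbert space $\mathcal K'\supseteq\mathcal H$ with $W_1^*|_{\mathcal H}=X^*$, $W_2^*|_{\mathcal H}=Y^*$, $W_3^*|_{\mathcal H}=Z^*$. *)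

From HB Require Import structures.
From mathcomp Require Import all_boot all_order all_algebra.
From mathcomp Require Import all_classical all_reals all_analysis.
From mathcomp Require Import complex.
Import Order.TTheory GRing.Theory Num.Theory.
Import numFieldNormedType.Exports.

Set Implicit Arguments.
Unset Strict Implicit.
Unset Printing Implicit Defensive.

Local Open Scope ring_scope.
Local Open Scope complex_scope.

Section TetraDefs.
Context {R : realType}.

Definition cvgC (u : nat -> R[i]) : Prop :=
  cvgn (series (fun n => complex.Re (u n))) /\
  cvgn (series (fun n => complex.Im (u n))).

Definition sumC (u : nat -> R[i]) : R[i] :=
  Complex (limn (series (fun n => complex.Re (u n))))
          (limn (series (fun n => complex.Im (u n)))).

(* The spaces.  C^2 = 'I_2 -> C ; l2(C^2) = sequences (c_0, c_1, ...)  *)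
(* of C^2 vectors ; H = l2(C^2)^{(+)4} ; K' = H (+) D (+) D (+) ...     *)
(* (elements of K' are sequences (k_0, k_1, ...) of elements of H).    *)
Definition C2 := 'I_2 -> R[i].
Definition L2 := nat -> C2.
Definition Hs := 'I_4 -> L2.
Definition Ks := nat -> Hs.

Definition ipC2 (u v : C2) : R[i] := \sum_(j < 2) u j * (v j)^*.

Definition inL2 (x : L2) : Prop := cvgC (fun n => ipC2 (x n) (x n)).
Definition ipL2 (x y : L2) : R[i] := sumC (fun n => ipC2 (x n) (y n)).

Definition inH (x : Hs) : Prop := forall i, inL2 (x i).
Definition ipH (x y : Hs) : R[i] := \sum_(i < 4) ipL2 (x i) (y i).

(* the four summands of H (paper numbering x_1, x_2, x_3, x_4) *)
Definition cmp1 : 'I_4 := @Ordinal 4 0 isT.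
Definition cmp2 : 'I_4 := @Ordinal 4 1 isT.
Definition cmp3 : 'I_4 := @Ordinal 4 2 isT.
Definition cmp4 : 'I_4 := @Ordinal 4 3 isT.

(* Generic operator-theoretic notions on a space given by a membership *)
(* predicate inV and an inner product ip (linear in the first slot).   *)
Section Generic.
Context {V : Type} (inV : V -> Prop) (ip : V -> V -> R[i]).

Definition is_adjoint (T Ts : V -> V) : Prop :=
  (forall x, inV x -> inV (Ts x)) /\
  (forall x y, inV x -> inV y -> ip (T x) y = ip x (Ts y)).

Definition positive_op (D : V -> V) : Prop :=
  is_adjoint D D /\ (forall x, inV x -> 0 <= ip (D x) x).

Definition orth_projection_onto (Q : V -> V) (S : V -> Prop) : Prop :=
  is_adjoint Q Q /\ (forall x, inV x -> Q (Q x) = Q x) /\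
  (forall y, S y <-> exists2 x, inV x & Q x = y).

(* The characterization of tetrablock isometries recalled in the      *)
(* V1 = V2^* V3 (written through the defining identity of the adjoint of V2).   *)
Definition tetrablock_isometry (V1 V2 V3 : V -> V) : Prop :=
  (forall x, inV x -> inV (V1 x) /\ inV (V2 x) /\ inV (V3 x)) /\
  (forall x, inV x -> V1 (V2 x) = V2 (V1 x) /\
                      V1 (V3 x) = V3 (V1 x) /\
                      V2 (V3 x) = V3 (V2 x)) /\
  (forall x, inV x -> ip (V3 x) (V3 x) = ip x x) /\
  (forall x, inV x -> ip (V1 x) (V1 x) <= ip x x /\
                      ip (V2 x) (V2 x) <= ip x x) /\
  (forall x y, inV x -> inV y -> ip (V1 x) y = ip (V3 x) (V2 y)).
End Generic.

(* Tetrablock isometric dilation of a triple (X1,X2,X3) on (W, inW, ipW) *)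
(* to (W1,W2,W3) on (K, inK, ipK), W sitting inside K through the      *)
(* isometric embedding emb.  Y1,Y2,Y3 are the adjoints X1^*,X2^*,X3^*; *)
(* the condition W_i^*|_H = X_i^* is written through the defining      *)
(* identity of the adjoint W_i^*: <W_i k, h> = <k, X_i^* h>.           *)
Definition tetrablock_isometric_dilation {W K : Type}
  (inW : W -> Prop) (ipW : W -> W -> R[i])
  (inK : K -> Prop) (ipK : K -> K -> R[i]) (emb : W -> K)
  (Y1 Y2 Y3 : W -> W) (W1 W2 W3 : K -> K) : Prop :=
  tetrablock_isometry inK ipK W1 W2 W3 /\
  (forall h, inW h -> inK (emb h)) /\
  (forall h h', inW h -> inW h' -> ipK (emb h) (emb h') = ipW h h') /\
  (forall k h, inK k -> inW h ->
     ipK (W1 k) (emb h) = ipK k (emb (Y1 h)) /\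
     ipK (W2 k) (emb h) = ipK k (emb (Y2 h)) /\
     ipK (W3 k) (emb h) = ipK k (emb (Y3 h))).

Definition zeroop {V : zmodType} : V -> V := fun _ => 0.

Definition Tz (c : L2) : L2 := fun n => if n is n'.+1 then c n' else 0.

Definition H1 (alpha : R[i]) (v : C2) : C2 :=
  fun j => if nat_of_ord j == 0%N then alpha * v (@Ordinal 2 1 isT) else 0.

Definition Nalpha (alpha : R[i]) (c : L2) : L2 :=
  fun n => if n == 0%N then H1 alpha (c 0%N) else 0.

Definition Aalpha (alpha : R[i]) (x : Hs) : Hs :=
  fun i => if nat_of_ord i == 2%N then Nalpha alpha (x cmp3) else 0.

Definition Pop (x : Hs) : Hs :=
  fun i => match nat_of_ord i with
           | 2 => Tz (x cmp2)
           | 3 => x cmp1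
           | _ => 0 end.

Definition Bop : Hs -> Hs := zeroop.

(* the projection I (+) I (+) (I - T_z T_z^* ) (+) 0, Tzs = T_z^* *)
Definition Qproj (Tzs : L2 -> L2) (x : Hs) : Hs :=
  fun i => match nat_of_ord i with
           | 0 => x cmp1
           | 1 => x cmp2
           | 2 => x cmp3 - Tz (Tzs (x cmp3))
           | _ => 0 end.

(* the space l2(C^2) (+) l2(C^2) (+) ker T_z^* (+) {0}, Tzs = T_z^* *)
Definition inDP (Tzs : L2 -> L2) (x : Hs) : Prop :=
  inH x /\ Tzs (x cmp3) = 0 /\ x cmp4 = 0.

(* G_1 (x1,x2,x3,0) = (0,0,N_alpha^* x3,0), Ns = N_alpha^* ; G_2 = 0 *)
Definition G1op (Ns : L2 -> L2) (x : Hs) : Hs :=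
  fun i => if nat_of_ord i == 2%N then Ns (x cmp3) else 0.
Definition G2op : Hs -> Hs := zeroop.

Definition inK (Tzs : L2 -> L2) (k : Ks) : Prop :=
  inH (k 0%N) /\ (forall n, inDP Tzs (k n.+1)) /\
  cvgC (fun n => ipH (k n) (k n)).
Definition ipK (k l : Ks) : R[i] := sumC (fun n => ipH (k n) (l n)).

Definition embK (h : Hs) : Ks := fun n => if n is 0 then h else 0.

(* d_0 := D_{P*} h, d_n := k_n (n >= 1) *)
Definition dprev (Dp : Hs -> Hs) (k : Ks) (n : nat) : Hs :=
  if n is 1 then Dp (k 0%N) else k n.-1.

Definition W1op (As G1 G1s Dp : Hs -> Hs) (k : Ks) : Ks :=
  fun n => if n is 0 then As (k 0%N)
           else G1s (dprev Dp k n) + G1 (k n).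

Definition W2op (Bs G1 G1s Dp : Hs -> Hs) (k : Ks) : Ks :=
  fun n => match n with
           | 0 => Bs (k 0%N)
           | 1 => G1 (Dp (k 0%N))
           | m.+1 => G1s (dprev Dp k m) + G1 (k m)
           end.

Definition W3op (Ps Dp : Hs -> Hs) (k : Ks) : Ks :=
  fun n => match n with
           | 0 => Ps (k 0%N)
           | 1 => 0
           | m.+1 => dprev Dp k m
           end.

End TetraDefs.

(* Uniqueness of adjoints makes every operator in the hypotheses explicit:
   P^* h = (h_4, T_z^* h_3, 0, 0), and D_{P^*}, being a positive square root of the projection
   I - P P^*, equals it, so D_{P^*} h = (h_1, h_2, (h_3)_0 e_0, 0). On D_{P^*} the operators G_1
   and G_1^* only see the C^2-entry at position 0 of the third summand, where they act by H_1^*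
   and H_1. Hence W_1 and W_2 act on K' through the sequence v of these entries, by the weighted
   shift v |-> (T_z (x) H_1 + I (x) H_1^* ) v (followed by T_z for W_2), while W_3 shifts the
   components. The shift commutes with this weighted shift, which gives commutativity;
   |alpha| <= 1 gives ||W_1||, ||W_2|| <= 1 since H_1 and H_1^* act on orthogonal coordinates;
   ||P^* h||^2 + ||D_{P^*} h||^2 = ||h||^2 makes W_3 isometric; and <W_1 k, l> = <W_3 k, W_2 l>
   is the adjointness of T_z. *)

From HB Require Import structures.
From mathcomp Require Import all_boot all_order all_algebra.
From mathcomp Require Import all_classical all_reals all_analysis.
From mathcomp Require Import complex.
From mathcomp Require Import ring lra.
Import Order.TTheory GRing.Theory Num.Theory.
Import numFieldNormedType.Exports.
Local Open Scope ring_scope.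
Local Open Scope complex_scope.

Lemma zerofctE (T : Type) (K : nmodType) : (0 : T -> K) = fun _ => 0.
Proof. by []. Qed.

Lemma ord4_cases (i : 'I_4) : [\/ i = cmp1, i = cmp2, i = cmp3 | i = cmp4].
Proof.
by case: i => -[|[|[|[|//]]]] p; [apply: Or41|apply: Or42|apply: Or43|apply: Or44]; apply/val_inj.
Qed.

Lemma big_ord4 (V : nmodType) (F : 'I_4 -> V) :
  \sum_(i < 4) F i = F cmp1 + F cmp2 + F cmp3 + F cmp4.
Proof.
rewrite (bigD1 cmp1) // (bigD1 cmp2) // (bigD1 cmp3) // (bigD1 cmp4) //= big1 ?addr0 ?addrA //.
by move=> i; case: (ord4_cases i) => ->; rewrite eqxx /= ?andbF.
Qed.

Lemma series0 (V : zmodType) (u : nat -> V) : series u 0 = 0.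
Proof. by rewrite /series /= big_geq. Qed.

Section ComplexParts.
Context {R : rcfType}.
Implicit Types x y : R[i].

Lemma complex_ext x y : complex.Re x = complex.Re y -> complex.Im x = complex.Im y -> x = y.
Proof. by case: x => a b; case: y => c d /= -> ->. Qed.

Lemma ReB x y : complex.Re (x - y) = complex.Re x - complex.Re y.
Proof. by case: x => a b; case: y => c d. Qed.
Lemma ImB x y : complex.Im (x - y) = complex.Im x - complex.Im y.
Proof. by case: x => a b; case: y => c d. Qed.
Lemma ReD x y : complex.Re (x + y) = complex.Re x + complex.Re y.
Proof. by case: x => a b; case: y => c d. Qed.
Lemma ImD x y : complex.Im (x + y) = complex.Im x + complex.Im y.
Proof. by case: x => a b; case: y => c d. Qed.
Lemma ReJ x : complex.Re x^* = complex.Re x.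
Proof. by case: x. Qed.
Lemma ImJ x : complex.Im x^* = - complex.Im x.
Proof. by case: x. Qed.

End ComplexParts.

(** * Real and complex series *)

Section RealSeries.
Context {R : realType}.
Implicit Types f g : nat -> R.

Definition cvgS f := cvgn (series f).
Definition sumS f := limn (series f).

Lemma eq_cvgS {f g} : f =1 g -> cvgS f -> cvgS g.
Proof. by move=> /funext ->. Qed.
Lemma eq_sumS {f g} : f =1 g -> sumS f = sumS g.
Proof. by move=> /funext ->. Qed.

Lemma cvgS_add {f g} : cvgS f -> cvgS g -> cvgS (fun n => f n + g n).
Proof. exact: is_cvg_seriesD. Qed.
Lemma sumS_sub f g : cvgS f -> cvgS g -> sumS (fun n => f n - g n) = sumS f - sumS g.
Proof. exact: lim_seriesB. Qed.
Lemma sumS_opp f : cvgS f -> sumS (fun n => - f n) = - sumS f.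
Proof. exact: lim_seriesN. Qed.
Lemma cvgS_scale c {f} : cvgS f -> cvgS (fun n => c * f n).
Proof. exact: is_cvg_seriesZ. Qed.

Lemma cvgS_zero : cvgS (fun _ => 0).
Proof.
rewrite /cvgS (_ : series _ = fun _ => 0); first exact: is_cvg_cst.
by apply/funext => n; rewrite /series /= big1.
Qed.
Lemma sumS_zero : sumS (fun _ => 0) = 0.
Proof.
rewrite /sumS (_ : series _ = fun _ => 0); first exact: lim_cst.
by apply/funext => n; rewrite /series /= big1.
Qed.

Lemma series_succ f : (fun n => series f n.+1) = cst (f 0%N) + series (fun k => f k.+1).
Proof. by apply/funext => n; rewrite /series /= big_nat_recl. Qed.

Lemma cvgS_shift f : cvgS f <-> cvgS (fun n => f n.+1).
Proof.
have cvg_succ : cvgS f <-> cvgn (fun n => series f n.+1).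
  by split => /cvg_ex[l hl]; apply/cvg_ex; exists l; rewrite ?cvg_shiftS // -cvg_shiftS.
apply: (iff_trans cvg_succ); rewrite series_succ is_cvgDrE; [by [] | exact: is_cvg_cst].
Qed.

Lemma sumS_shift f : cvgS f -> sumS f = f 0%N + sumS (fun n => f n.+1).
Proof.
move=> /[dup] hf /cvgS_shift hf'.
have : ((fun n => series f n.+1) @ \oo --> f 0%N + sumS (fun n => f n.+1))%classic.
  by rewrite series_succ; apply: cvgD; [exact: cvg_cst | exact: hf'].
by rewrite cvg_shiftS => /cvg_lim; rewrite /sumS => ->.
Qed.

Lemma cvgS_single {f m} : (forall n, n != m -> f n = 0) -> cvgS f /\ sumS f = f m.
Proof.
elim: m f => [|m IH] f hf.
  have f0 : cvgS (fun n => f n.+1).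
    by apply: (eq_cvgS _ cvgS_zero) => n; rewrite hf.
  have hc := proj2 (cvgS_shift f) f0.
  split => //; rewrite sumS_shift // (@eq_sumS _ (fun _ => 0)) ?sumS_zero ?addr0 //.
  by move=> n; rewrite hf.
have [hc e] := IH (fun n => f n.+1) (fun n hn => hf n.+1 hn).
have hc' := proj2 (cvgS_shift f) hc.
by split => //; rewrite sumS_shift // e hf // add0r.
Qed.

Lemma cvgS_le {f} g : (forall n, 0 <= f n) -> (forall n, f n <= g n) -> cvgS g -> cvgS f.
Proof. by move=> f0 fg; apply: series_le_cvg => // n; exact: le_trans (fg n). Qed.

Lemma cvgS_dom {f g} : (forall n, `|f n| <= g n) -> cvgS g -> cvgS f.
Proof. by move=> fg cg; apply: normed_cvg; apply: (cvgS_le g _ fg cg) => n; exact: normr_ge0. Qed.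

Lemma sumS_le {f g} : cvgS f -> cvgS g -> (forall n, f n <= g n) -> sumS f <= sumS g.
Proof. exact: lim_series_le. Qed.

Lemma sumS_le_series {f g} : cvgS f -> cvgS g -> (forall N, series f N <= series g N) ->
  sumS f <= sumS g.
Proof. by move=> cf cg h; apply: ler_lim => //; near=> N; apply: h. Unshelve. all: by end_near. Qed.

Lemma series_le_sumS {f} N : (forall n, 0 <= f n) -> cvgS f -> series f N <= sumS f.
Proof.
move=> f0 cf; apply: nondecreasing_cvgn_le => //.
by apply: (nondecreasing_series (P := predT) (m := 0%N)) => n _ _; apply: f0.
Qed.

Lemma term_le_sumS {f} m : (forall n, 0 <= f n) -> cvgS f -> f m <= sumS f.
Proof.
move=> f0 cf; apply: le_trans (series_le_sumS m.+1 f0 cf).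
by rewrite /series /= big_nat_recr //= lerDr; apply: sumr_ge0 => i _.
Qed.

Lemma sumS_ge0 {f} : (forall n, 0 <= f n) -> cvgS f -> 0 <= sumS f.
Proof. by move=> f0 cf; exact: le_trans (f0 0%N) (term_le_sumS 0 f0 cf). Qed.

Lemma sumS_eq0 {f} : (forall n, 0 <= f n) -> cvgS f -> sumS f = 0 -> forall n, f n = 0.
Proof. by move=> f0 cf e n; apply/le_anti; rewrite f0 andbT -e term_le_sumS. Qed.

End RealSeries.

Section ComplexSeries.
Context {R : realType}.
Implicit Types (u v : nat -> R[i]) (f : nat -> R).

Lemma sumC_Re u : complex.Re (sumC u) = sumS (fun n => complex.Re (u n)).
Proof. by []. Qed.
Lemma sumC_Im u : complex.Im (sumC u) = sumS (fun n => complex.Im (u n)).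
Proof. by []. Qed.

Lemma eq_sumC {u v} : u =1 v -> sumC u = sumC v.
Proof. by move=> /funext ->. Qed.

Lemma sumC_sub u v : cvgC u -> cvgC v -> sumC (fun n => u n - v n) = sumC u - sumC v.
Proof.
move=> [a b] [c d]; apply: complex_ext => /=.
  by rewrite -sumS_sub //; apply: eq_sumS => n; rewrite ReB.
by rewrite -sumS_sub //; apply: eq_sumS => n; rewrite ImB.
Qed.
Lemma sumC_conj u : cvgC u -> sumC (fun n => (u n)^*) = (sumC u)^*.
Proof.
move=> [a b]; apply: complex_ext => /=.
  by apply: eq_sumS => n; rewrite ReJ.
by rewrite -sumS_opp //; apply: eq_sumS => n; rewrite ImJ.
Qed.

Lemma sumC_shift u : cvgC u -> sumC u = u 0%N + sumC (fun n => u n.+1).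
Proof.
move=> [a b]; apply: complex_ext; [rewrite ReD !sumC_Re | rewrite ImD !sumC_Im].
all: exact: sumS_shift.
Qed.

Lemma cvgC_single {u m} : (forall n, n != m -> u n = 0) -> cvgC u /\ sumC u = u m.
Proof.
move=> h.
have [a ea] := @cvgS_single _ (fun n => complex.Re (u n)) m (fun n hn => f_equal _ (h n hn)).
have [b eb] := @cvgS_single _ (fun n => complex.Im (u n)) m (fun n hn => f_equal _ (h n hn)).
by split; [split | apply: complex_ext; rewrite /= ?ea ?eb].
Qed.

Lemma cvgC_real f : cvgC (fun n => (f n)%:C) <-> cvgS f.
Proof. by split => [[]//|h]; split => //=; apply: cvgS_zero. Qed.
Lemma sumC_real f : sumC (fun n => (f n)%:C) = (sumS f)%:C.
Proof. by apply: complex_ext; rewrite // sumC_Im -[RHS](@sumS_zero R). Qed.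

Lemma sumC_zero : sumC (fun _ => 0 : R[i]) = 0.
Proof. by apply: complex_ext; rewrite ?sumC_Re ?sumC_Im sumS_zero. Qed.

End ComplexSeries.

(** * Positive definite forms and adjoints *)

Record definite_form {R : realType} {V : zmodType} {inV : V -> Prop} {ip : V -> V -> R[i]} :
    Prop := DefiniteForm {
  mem0 : inV 0;
  memB : forall {x y}, inV x -> inV y -> inV (x - y);
  ipBl : forall {x y z}, inV x -> inV y -> inV z -> ip (x - y) z = ip x z - ip y z;
  ipBr : forall {x y z}, inV x -> inV y -> inV z -> ip z (x - y) = ip z x - ip z y;
  ip_ge0 : forall {x}, inV x -> 0 <= ip x x;
  ip_eq0 : forall {x}, inV x -> ip x x = 0 -> x = 0 }.
Arguments definite_form {R V} inV ip.

Section DefiniteFormTheory.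
Context {R : realType} {V : zmodType} {inV : V -> Prop} {ip : V -> V -> R[i]}.
Hypothesis hV : definite_form inV ip.

Lemma ip0l x : inV x -> ip 0 x = 0.
Proof.
by move=> hx; have := ipBl hV (mem0 hV) (mem0 hV) hx; rewrite subr0 subrr.
Qed.
Lemma ip0r x : inV x -> ip x 0 = 0.
Proof.
by move=> hx; have := ipBr hV (mem0 hV) (mem0 hV) hx; rewrite subr0 subrr.
Qed.

Lemma memN {x} : inV x -> inV (- x).
Proof. by move=> hx; rewrite -sub0r; exact: (memB hV (mem0 hV) hx). Qed.

Lemma memD {x y} : inV x -> inV y -> inV (x + y).
Proof. by move=> hx hy; rewrite -[y]opprK; exact: (memB hV hx (memN hy)). Qed.

Lemma ipNl y z : inV y -> inV z -> ip (- y) z = - ip y z.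
Proof. by move=> hy hz; have h0 := mem0 hV; rewrite -sub0r (ipBl hV) // ip0l // sub0r. Qed.
Lemma ipNr y z : inV y -> inV z -> ip z (- y) = - ip z y.
Proof. by move=> hy hz; have h0 := mem0 hV; rewrite -sub0r (ipBr hV) // ip0r // sub0r. Qed.

Lemma ipDl x y z : inV x -> inV y -> inV z -> ip (x + y) z = ip x z + ip y z.
Proof.
by move=> hx hy hz; have hNy := memN hy; rewrite -{1}[y]opprK (ipBl hV) // ipNl // opprK.
Qed.
Lemma ipDr x y z : inV x -> inV y -> inV z -> ip z (x + y) = ip z x + ip z y.
Proof.
by move=> hx hy hz; have hNy := memN hy; rewrite -{1}[y]opprK (ipBr hV) // ipNr // opprK.
Qed.

Lemma ip_injr {u v} : inV u -> inV v -> (forall d, inV d -> ip d u = ip d v) -> u = v.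
Proof.
move=> hu hv huv; have huv' : inV (u - v) by exact: (memB hV).
apply/eqP; rewrite -subr_eq0; apply/eqP/(ip_eq0 hV) => //.
by rewrite (ipBr hV) // !huv ?subrr.
Qed.

Lemma adjoint_unique {T Ts Ts'} : is_adjoint inV ip T Ts -> is_adjoint inV ip T Ts' ->
  forall y, inV y -> Ts y = Ts' y.
Proof.
move=> [mem adj] [mem' adj'] y hy.
by apply: ip_injr; [exact: mem | exact: mem' | move=> d hd; rewrite -adj // -adj'].
Qed.

Lemma selfadjoint_additive {D} : is_adjoint inV ip D D ->
  forall a b, inV a -> inV b -> D (a - b) = D a - D b.
Proof.
move=> [mem adj] a b ha hb.
have [hDa hDb] := (mem a ha, mem b hb).
have hab : inV (a - b) by exact: (memB hV).
apply: ip_injr; [exact: mem | exact: (memB hV) | move=> d hd].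
have hDd := mem d hd.
by rewrite -adj // !(ipBr hV) // -!adj.
Qed.

(* D commutes with Q = D^2, so w := D (D x - Q x) satisfies D w = - w, which positivity
   forces to vanish; then D x - Q x is orthogonal to itself. *)
Lemma positive_sqrt_projection {D Q} : positive_op inV ip D -> is_adjoint inV ip Q Q ->
  (forall x, inV x -> D (D x) = Q x) -> (forall x, inV x -> Q (Q x) = Q x) ->
  forall x, inV x -> D x = Q x.
Proof.
move=> [[Dmem Dadj] Dpos] [Qmem Qadj] D2 Q2 x hx.
have DB := selfadjoint_additive (conj Dmem Dadj).
have QB := selfadjoint_additive (conj Qmem Qadj).
have h0 := mem0 hV; have hDx := Dmem _ hx; have hQx := Qmem _ hx.
set y := D x - Q x.
have hy : inV y by exact: (memB hV).
have DQ : D (Q x) = Q (D x) by rewrite -{1}(D2 x hx) D2.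
have Dy : D y = Q x - Q (D x) by rewrite DB // D2 // DQ.
have Qy : Q y = - D y by rewrite QB // Q2 // Dy opprB.
set w := D y.
have hw : inV w by exact: Dmem.
have Dw : D w = - w by rewrite /w D2.
have ww0 : ip w w = 0.
  apply/le_anti; rewrite (ip_ge0 hV) // andbT -oppr_ge0.
  by have := Dpos w hw; rewrite Dw ipNl.
have w0 : w = 0 := ip_eq0 hV hw ww0.
apply/eqP; rewrite -subr_eq0 -/y; apply/eqP/(ip_eq0 hV) => //.
by rewrite {1}/y (ipBl hV) // Dadj // Qadj // Qy -/w w0 oppr0 subrr.
Qed.

End DefiniteFormTheory.

Section TetrablockTransfer.
Context {R : realType} {V : Type} {inV : V -> Prop} {ip : V -> V -> R[i]}.
Context {V1 V2 V3 V1' V2' V3' : V -> V}.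
Hypotheses (e1 : forall x, inV x -> V1' x = V1 x) (e2 : forall x, inV x -> V2' x = V2 x)
  (e3 : forall x, inV x -> V3' x = V3 x).

Lemma eq_tetrablock_isometry :
  tetrablock_isometry inV ip V1 V2 V3 -> tetrablock_isometry inV ip V1' V2' V3'.
Proof.
move=> [mem [comm [iso [contr adj]]]].
split=> [x hx|]; first by rewrite e1 // e2 // e3 //; exact: mem.
split=> [x hx|].
  have [h1 [h2 h3]] := mem x hx.
  by rewrite (e1 x) ?(e2 x) ?(e3 x) // !e1 ?e2 ?e3 //; exact: comm.
split=> [x hx|]; first by rewrite e3 //; exact: iso.
split=> [x hx|x y hx hy]; first by rewrite e1 // e2 //; exact: contr.
by rewrite e1 // e3 // e2 //; exact: adj.
Qed.

Lemma eq_tetrablock_isometric_dilation {W : Type} {inW : W -> Prop} {ipW : W -> W -> R[i]}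
    {emb : W -> V} {Y1 Y2 Y3 : W -> W} :
  tetrablock_isometric_dilation inW ipW inV ip emb Y1 Y2 Y3 V1 V2 V3 ->
  tetrablock_isometric_dilation inW ipW inV ip emb Y1 Y2 Y3 V1' V2' V3'.
Proof.
move=> [iso [mem [ipemb compat]]]; split; first exact: eq_tetrablock_isometry.
by do 2!split=> //; move=> k h hk hh; rewrite e1 // e2 // e3 //; exact: compat.
Qed.

End TetrablockTransfer.

(** * The spaces C^2, l^2(C^2) and H *)

Section Spaces.
Context {R : realType}.
Local Notation C2R := (@C2 R).
Local Notation L2R := (@L2 R).
Local Notation HsR := (@Hs R).
Local Notation o0 := (@Ordinal 2 0 isT).
Local Notation o1 := (@Ordinal 2 1 isT).

Definition csq (z : R[i]) : R := complex.Re z ^+ 2 + complex.Im z ^+ 2.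
Definition normC2 (u : C2R) : R := csq (u o0) + csq (u o1).

Lemma csq_ge0 z : 0 <= csq z.
Proof. rewrite /csq; nra. Qed.

Lemma csq_le1 z : `|z| <= 1 -> csq z <= 1.
Proof.
rewrite normc_def -[1]/((1 : R)%:C) lecR => z1.
have z0 := csq_ge0 z; rewrite -(sqr_sqrtr z0); have := sqrtr_ge0 (csq z).
by rewrite /csq in z1 *; nra.
Qed.

Lemma ord2_cases (j : 'I_2) : j = o0 \/ j = o1.
Proof. by case: j => -[|[|//]] p; [left|right]; apply/val_inj. Qed.

Lemma C2_ext (u v : C2R) : u o0 = v o0 -> u o1 = v o1 -> u = v.
Proof. by move=> e0 e1; apply/funext => j; case: (ord2_cases j) => ->. Qed.

Section C2Space.
Implicit Types u v w : C2R.

Lemma ipC2E u v : ipC2 u v = u o0 * (v o0)^* + u o1 * (v o1)^*.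
Proof.
rewrite /ipC2 big_ord_recl big_ord1.
by congr (u _ * (v _)^* + u _ * (v _)^*); apply: val_inj.
Qed.

Lemma ipC2_self u : ipC2 u u = (normC2 u)%:C.
Proof.
rewrite ipC2E /normC2 /csq; case: (u o0) => a b; case: (u o1) => c d.
by apply: complex_ext => /=; ring.
Qed.

Lemma normC2_ge0 u : 0 <= normC2 u.
Proof. by rewrite /normC2 addr_ge0 ?csq_ge0. Qed.

Lemma normC2_0 : normC2 0 = 0.
Proof. by rewrite /normC2 /csq /= expr2 mulr0 !addr0. Qed.

Lemma normC2_eq0 u : normC2 u = 0 -> u = 0.
Proof.
rewrite /normC2 /csq => h.
have := sqr_ge0 (complex.Re (u o0)); have := sqr_ge0 (complex.Im (u o0)).
have := sqr_ge0 (complex.Re (u o1)); have := sqr_ge0 (complex.Im (u o1)).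
move=> ? ? ? ?; have sq0 (z : R) : z ^+ 2 = 0 -> z = 0 by move=> /eqP; rewrite sqrf_eq0 => /eqP.
by apply: C2_ext; apply: complex_ext; apply: sq0; lra.
Qed.

Lemma normC2_sub u w : normC2 (u - w) <= 2 * normC2 u + 2 * normC2 w.
Proof.
rewrite /normC2 /csq !fctE /=; case: (u o0) => a b; case: (u o1) => c d.
case: (w o0) => p q; case: (w o1) => r s /=.
have := sqr_ge0 (a + p); have := sqr_ge0 (b + q).
have := sqr_ge0 (c + r); have := sqr_ge0 (d + s); nra.
Qed.

Lemma ipC2_subl u w v : ipC2 (u - w) v = ipC2 u v - ipC2 w v.
Proof. by rewrite /ipC2 -sumrB; apply: eq_bigr => j _; rewrite -mulrBl. Qed.
Lemma ipC2_subr v u w : ipC2 v (u - w) = ipC2 v u - ipC2 v w.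
Proof. by rewrite /ipC2 -sumrB; apply: eq_bigr => j _; rewrite -mulrBr -rmorphB. Qed.
Lemma ipC2_0l v : ipC2 0 v = 0.
Proof. by rewrite /ipC2 big1 // => j _; rewrite mul0r. Qed.
Lemma ipC2_0r v : ipC2 v 0 = 0.
Proof. by rewrite /ipC2 big1 // => j _; rewrite zerofctE /= rmorph0 mulr0. Qed.
Lemma ipC2_conj u v : ipC2 v u = (ipC2 u v)^*.
Proof.
rewrite !ipC2E; case: (u o0) => a b; case: (u o1) => c d.
by case: (v o0) => a' b'; case: (v o1) => c' d'; apply: complex_ext => /=; ring.
Qed.

Lemma mul_le_sqrD (p q : R) : `|p * q| <= p ^+ 2 + q ^+ 2.
Proof.
rewrite ler_norml; have := sqr_ge0 (p - q); have := sqr_ge0 (p + q).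
by move=> ? ?; apply/andP; split; nra.
Qed.

Lemma Re_ipC2_le u v : `|complex.Re (ipC2 u v)| <= normC2 u + normC2 v.
Proof.
rewrite ipC2E /normC2 /csq; case: (u o0) => a b; case: (u o1) => c d.
case: (v o0) => a' b'; case: (v o1) => c' d' /=.
have := mul_le_sqrD a a'; have := mul_le_sqrD b b'.
have := mul_le_sqrD c c'; have := mul_le_sqrD d d'.
rewrite !ler_norml => /andP[? ?] /andP[? ?] /andP[? ?] /andP[? ?]; apply/andP; split; lra.
Qed.

Lemma Im_ipC2_le u v : `|complex.Im (ipC2 u v)| <= normC2 u + normC2 v.
Proof.
rewrite ipC2E /normC2 /csq; case: (u o0) => a b; case: (u o1) => c d.
case: (v o0) => a' b'; case: (v o1) => c' d' /=.
have := mul_le_sqrD a b'; have := mul_le_sqrD b a'.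
have := mul_le_sqrD c d'; have := mul_le_sqrD d c'.
rewrite !ler_norml => /andP[? ?] /andP[? ?] /andP[? ?] /andP[? ?]; apply/andP; split; lra.
Qed.

End C2Space.

Section H1.
Variable alpha : R[i].
Implicit Types u v : C2R.

Definition H1s v : C2R := fun j => if nat_of_ord j == 1%N then alpha^* * v o0 else 0.

Lemma H1_0 : H1 alpha 0 = 0.
Proof. by apply: C2_ext; rewrite /H1 /= ?mulr0. Qed.
Lemma H1s_0 : H1s 0 = 0.
Proof. by apply: C2_ext; rewrite /H1s /= ?mulr0. Qed.

Lemma ipC2_H1l u v : ipC2 (H1 alpha u) v = ipC2 u (H1s v).
Proof.
rewrite !ipC2E /H1 /H1s /=; case: (u o1) => a b; case: (v o0) => c d.
by case: (u o0) => ? ?; case: (v o1) => ? ?; case: alpha => p q; apply: complex_ext => /=; ring.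
Qed.
Lemma ipC2_H1sl u v : ipC2 (H1s u) v = ipC2 u (H1 alpha v).
Proof. by rewrite ipC2_conj -ipC2_H1l -ipC2_conj. Qed.

Lemma normC2_H1 v : normC2 (H1 alpha v) = csq alpha * csq (v o1).
Proof.
rewrite /normC2 /csq /H1 /=; case: (v o1) => a b; case: alpha => p q /=.
by rewrite expr0n /=; ring.
Qed.
Lemma normC2_H1s v : normC2 (H1s v) = csq alpha * csq (v o0).
Proof.
rewrite /normC2 /csq /H1s /=; case: (v o0) => a b; case: alpha => p q /=.
by rewrite expr0n /=; ring.
Qed.
Lemma normC2_H1_H1s u v :
  normC2 (H1 alpha u + H1s v) = csq alpha * (csq (u o1) + csq (v o0)).
Proof.
rewrite /normC2 /csq /H1 /H1s /=; case: (u o1) => a b; case: (v o0) => c d.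
by case: alpha => p q /=; ring.
Qed.

End H1.

Section L2Space.
Implicit Types (x y z c : L2R) (u : C2R).

Definition nL2 x : R := sumS (fun n => normC2 (x n)).
Definition bshift x : L2R := fun n => x n.+1.

Lemma ipC2_selfE x : (fun n => ipC2 (x n) (x n)) = fun n => (normC2 (x n))%:C.
Proof. by apply/funext => n; rewrite ipC2_self. Qed.

Lemma inL2E x : inL2 x <-> cvgS (fun n => normC2 (x n)).
Proof. by rewrite /inL2 ipC2_selfE; exact: cvgC_real. Qed.

Lemma ipL2_self x : ipL2 x x = (nL2 x)%:C.
Proof. by rewrite /ipL2 ipC2_selfE sumC_real. Qed.

Lemma nL2_ge0 x : inL2 x -> 0 <= nL2 x.
Proof. by move=> /inL2E hx; apply: sumS_ge0 => // n; exact: normC2_ge0. Qed.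

Lemma normC2_le_nL2 x m : inL2 x -> normC2 (x m) <= nL2 x.
Proof. by move=> /inL2E hx; apply: term_le_sumS => // n; exact: normC2_ge0. Qed.

Lemma ipL2_cvg x y : inL2 x -> inL2 y -> cvgC (fun n => ipC2 (x n) (y n)).
Proof.
move=> /inL2E hx /inL2E hy; have hxy := cvgS_add hx hy.
by split; apply: (cvgS_dom _ hxy) => n; [exact: Re_ipC2_le | exact: Im_ipC2_le].
Qed.

Lemma inL2_shift x : inL2 x <-> inL2 (bshift x).
Proof. by rewrite !inL2E; exact: cvgS_shift. Qed.

Lemma ipL2_shift x y : inL2 x -> inL2 y ->
  ipL2 x y = ipC2 (x 0%N) (y 0%N) + ipL2 (bshift x) (bshift y).
Proof. by move=> hx hy; rewrite /ipL2 sumC_shift //; exact: ipL2_cvg. Qed.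

Lemma nL2_shift x : inL2 x -> nL2 x = normC2 (x 0%N) + nL2 (bshift x).
Proof. by move=> /inL2E hx; rewrite /nL2 sumS_shift. Qed.

Lemma ipL2_0l y : ipL2 0 y = 0.
Proof. by rewrite /ipL2 -[RHS]sumC_zero; congr sumC; apply/funext => n; exact: ipC2_0l. Qed.
Lemma ipL2_0r y : ipL2 y 0 = 0.
Proof. by rewrite /ipL2 -[RHS]sumC_zero; congr sumC; apply/funext => n; exact: ipC2_0r. Qed.

Lemma nL2_0 : nL2 0 = 0.
Proof. by apply: complexI; rewrite -ipL2_self ipL2_0l. Qed.

Lemma ipL2_conj x y : inL2 x -> inL2 y -> ipL2 y x = (ipL2 x y)^*.
Proof.
move=> hx hy; rewrite /ipL2 -sumC_conj; last exact: ipL2_cvg.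
by apply: eq_sumC => n; rewrite ipC2_conj.
Qed.

Lemma L2_definite_form : definite_form (@inL2 R) ipL2.
Proof.
split.
- by apply/inL2E; apply: (eq_cvgS _ cvgS_zero) => n; rewrite zerofctE /= normC2_0.
- move=> x y /inL2E hx /inL2E hy; apply/inL2E.
  apply: (cvgS_le _ _ _ (cvgS_add (cvgS_scale 2 hx) (cvgS_scale 2 hy))) => n.
    exact: normC2_ge0.
  by rewrite !fctE; exact: normC2_sub.
- move=> x y z hx hy hz; rewrite /ipL2 -sumC_sub; try exact: ipL2_cvg.
  by apply: eq_sumC => n; rewrite -ipC2_subl.
- move=> x y z hx hy hz; rewrite /ipL2 -sumC_sub; try exact: ipL2_cvg.
  by apply: eq_sumC => n; rewrite -ipC2_subr.
- by move=> x hx; rewrite ipL2_self lecR; exact: nL2_ge0.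
- move=> x /inL2E hx; rewrite ipL2_self => -[nx0].
  apply/funext => n; apply: normC2_eq0.
  exact: sumS_eq0 (fun n => normC2_ge0 _) hx nx0 n.
Qed.

Definition single (m : nat) u : L2R := fun n => if n == m then u else 0.

Lemma inL2_single m u : inL2 (single m u).
Proof.
have h n : n != m -> normC2 (single m u n) = 0.
  by move=> /negPf nm; rewrite /single nm normC2_0.
by apply/inL2E; exact: (cvgS_single h).1.
Qed.
Lemma ipL2_singlel m u y : ipL2 (single m u) y = ipC2 u (y m).
Proof.
have h n : n != m -> ipC2 (single m u n) (y n) = 0.
  by move=> /negPf nm; rewrite /single nm ipC2_0l.
by rewrite /ipL2 (cvgC_single h).2 /single eqxx.
Qed.
Lemma ipL2_singler m u y : ipL2 y (single m u) = ipC2 (y m) u.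
Proof.
have h n : n != m -> ipC2 (y n) (single m u n) = 0.
  by move=> /negPf nm; rewrite /single nm ipC2_0r.
by rewrite /ipL2 (cvgC_single h).2 /single eqxx.
Qed.

Lemma nL2_single m u : nL2 (single m u) = normC2 u.
Proof. by apply: complexI; rewrite -ipL2_self ipL2_singlel /single eqxx ipC2_self. Qed.

Lemma bshift_eq0 x : bshift x = 0 -> forall n, x n.+1 = 0.
Proof. by move=> h n; have := congr1 (fun z => z n) h; rewrite zerofctE. Qed.

Lemma sub_Tz_bshift x : x - Tz (bshift x) = single 0 (x 0%N).
Proof.
apply/funext => n; change (x n - Tz (bshift x) n = single 0 (x 0%N) n).
by case: n => [|n] /=; rewrite ?subr0 ?subrr.
Qed.

End L2Space.

Lemma inL2_Tz {c : L2R} : inL2 c -> inL2 (Tz c).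
Proof. exact: (inL2_shift (Tz c)).2. Qed.

Lemma nL2_Tz (c : L2R) : inL2 c -> nL2 (Tz c) = nL2 c.
Proof. by move=> hc; rewrite (nL2_shift _ (inL2_Tz hc)) /= normC2_0 add0r. Qed.

Lemma Tz_adjoint : is_adjoint inL2 ipL2 Tz bshift.
Proof.
split=> [y /inL2_shift //|c y hc hy].
by rewrite (ipL2_shift (Tz c) y) ?ipC2_0l ?add0r //; exact: inL2_Tz.
Qed.

Definition Nstar (alpha : R[i]) (c : L2R) : L2R := single 0 (H1s alpha (c 0%N)).

Lemma Nalpha_adjoint alpha : is_adjoint inL2 ipL2 (Nalpha alpha) (Nstar alpha).
Proof.
split=> [y _|c y _ _]; first exact: inL2_single.
have -> : Nalpha alpha c = single 0 (H1 alpha (c 0%N)) by [].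
by rewrite ipL2_singlel ipL2_singler ipC2_H1l.
Qed.

Section HSpace.
Implicit Types (h k x y : HsR).

Definition nH h : R := \sum_(i < 4) nL2 (h i).

Lemma ipH4 h k : ipH h k = ipL2 (h cmp1) (k cmp1) + ipL2 (h cmp2) (k cmp2)
   + ipL2 (h cmp3) (k cmp3) + ipL2 (h cmp4) (k cmp4).
Proof. exact: big_ord4. Qed.
Lemma nH4 h : nH h = nL2 (h cmp1) + nL2 (h cmp2) + nL2 (h cmp3) + nL2 (h cmp4).
Proof. exact: big_ord4. Qed.

Lemma ipH_self h : ipH h h = (nH h)%:C.
Proof. by rewrite /ipH /nH raddf_sum; apply: eq_bigr => i _; rewrite ipL2_self. Qed.

Lemma nH_ge0 h : inH h -> 0 <= nH h.
Proof. by move=> hh; apply: sumr_ge0 => i _; exact: nL2_ge0. Qed.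

Lemma nL2_le_nH h i : inH h -> nL2 (h i) <= nH h.
Proof. by move=> hh; rewrite /nH (bigD1 i) //= lerDl; apply: sumr_ge0 => j _; exact: nL2_ge0. Qed.

Lemma ipH_0l h : ipH 0 h = 0.
Proof. by rewrite /ipH big1 // => i _; exact: ipL2_0l. Qed.
Lemma ipH_0r h : ipH h 0 = 0.
Proof. by rewrite /ipH big1 // => i _; exact: ipL2_0r. Qed.

Lemma ipH_conj h k : inH h -> inH k -> ipH k h = (ipH h k)^*.
Proof. by move=> hh hk; rewrite /ipH rmorph_sum; apply: eq_bigr => i _; rewrite ipL2_conj. Qed.

Lemma H_definite_form : definite_form (@inH R) ipH.
Proof.
have L2f := L2_definite_form.
split.
- by move=> i; exact: (mem0 L2f).
- by move=> x y hx hy i; exact: (memB L2f).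
- by move=> x y z hx hy hz; rewrite /ipH -sumrB; apply: eq_bigr => i _; exact: (ipBl L2f).
- by move=> x y z hx hy hz; rewrite /ipH -sumrB; apply: eq_bigr => i _; exact: (ipBr L2f).
- by move=> x hx; rewrite ipH_self lecR; exact: nH_ge0.
- move=> x hx; rewrite ipH_self => -[nx0]; apply/funext => i.
  apply: (ip_eq0 L2f) => //; rewrite ipL2_self; congr (_%:C).
  by apply/le_anti; rewrite nL2_ge0 // andbT -nx0 nL2_le_nH.
Qed.

Definition E3 (w : C2R) : HsR := fun i => if nat_of_ord i == 2%N then single 0 w else 0.

Lemma inH_E3 w : inH (E3 w).
Proof.
by move=> i; rewrite /E3; case: ifP => _; [exact: inL2_single | exact: (mem0 L2_definite_form)].
Qed.
Lemma ipH_E3l w h : ipH (E3 w) h = ipC2 w (h cmp3 0%N).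
Proof. by rewrite ipH4 /E3 /= !ipL2_0l ipL2_singlel !add0r addr0. Qed.
Lemma ipH_E3r h w : ipH h (E3 w) = ipC2 (h cmp3 0%N) w.
Proof. by rewrite ipH4 /E3 /= !ipL2_0r ipL2_singler !add0r addr0. Qed.
Lemma nH_E3 w : nH (E3 w) = normC2 w.
Proof. by apply: complexI; rewrite -ipH_self ipH_E3l ipC2_self. Qed.
Lemma nH_0 : nH 0 = 0.
Proof. by rewrite nH4 /= nL2_0 !addr0. Qed.

Lemma E3_0 : E3 0 = 0.
Proof.
apply/funext => i; rewrite /E3; case: ifP => // _.
by apply/funext => n; rewrite /single; case: ifP.
Qed.
Lemma E3_add w w' : E3 (w + w') = E3 w + E3 w'.
Proof.
apply/funext => i; apply/funext => n.
change (E3 (w + w') i n = E3 w i n + E3 w' i n); rewrite /E3 /single.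
by case: (_ == 2%N); case: (n == 0%N); rewrite ?addr0.
Qed.

Definition Astar (alpha : R[i]) y : HsR := E3 (H1s alpha (y cmp3 0%N)).

Lemma Aalpha_E3 alpha x : Aalpha alpha x = E3 (H1 alpha (x cmp3 0%N)).
Proof. by []. Qed.

Lemma Aalpha_adjoint alpha : is_adjoint inH ipH (Aalpha alpha) (Astar alpha).
Proof.
split=> [y _|x y _ _]; first exact: inH_E3.
by rewrite Aalpha_E3 ipH_E3l ipH_E3r ipC2_H1l.
Qed.

Definition Pstar y : HsR := fun i => match nat_of_ord i with
  | 0 => y cmp4 | 1 => bshift (y cmp3) | _ => 0 end.

Lemma Pop_adjoint : is_adjoint inH ipH Pop Pstar.
Proof.
split=> [y hy i|x y hx hy].
  case: (ord4_cases i) => ->;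
    [exact: hy | exact: Tz_adjoint.1 | exact: (mem0 L2_definite_form)..].
rewrite !ipH4 /= !ipL2_0l !ipL2_0r !add0r !addr0 addrC.
by rewrite (Tz_adjoint.2 _ _ (hx cmp2) (hy cmp3)).
Qed.

Lemma inH_Pop {y} : inH y -> inH (Pop y).
Proof.
move=> hy i; case: (ord4_cases i) => ->; rewrite /Pop /=; try exact: (mem0 L2_definite_form).
  exact: inL2_Tz.
exact: hy.
Qed.

Definition defectP y : HsR := fun i => match nat_of_ord i with
  | 0 => y cmp1 | 1 => y cmp2 | 2 => single 0 (y cmp3 0%N) | _ => 0 end.

Lemma inH_defectP {y} : inH y -> inH (defectP y).
Proof.
move=> hy i; case: (ord4_cases i) => ->; [exact: hy | exact: hy | exact: inL2_single |].
exact: (mem0 L2_definite_form).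
Qed.

Lemma defectP_selfadjoint : is_adjoint inH ipH defectP defectP.
Proof.
split=> [y hy|x y _ _]; first exact: inH_defectP.
by rewrite !ipH4 /= ipL2_0l ipL2_0r ipL2_singlel ipL2_singler.
Qed.

Lemma defectP_idem y : defectP (defectP y) = defectP y.
Proof. by apply/funext => i; case: (ord4_cases i) => ->. Qed.

Lemma defectP_E3 w : defectP (E3 w) = E3 w.
Proof. by apply/funext => i; case: (ord4_cases i) => ->. Qed.

Lemma Pstar_E3 w : Pstar (E3 w) = 0.
Proof. by apply/funext => i; case: (ord4_cases i) => ->. Qed.

Lemma sub_Pop_Pstar y : y - Pop (Pstar y) = defectP y.
Proof.
apply/funext => i; change (y i - Pop (Pstar y) i = defectP y i).
by case: (ord4_cases i) => -> /=; rewrite ?subr0 ?subrr ?sub_Tz_bshift.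
Qed.

Lemma nH_Pstar_defectP y : inH y -> nH (Pstar y) + nH (defectP y) = nH y.
Proof.
move=> hy; rewrite !nH4 /= nL2_single nL2_0 (nL2_shift _ (hy cmp3)).
by rewrite !addr0; lra.
Qed.

Section DefectSpace.
Context {Tzs : L2R -> L2R} (hTzs : is_adjoint inL2 ipL2 Tz Tzs).

Lemma Tzs_bshift c : inL2 c -> Tzs c = bshift c.
Proof. exact: (adjoint_unique L2_definite_form hTzs Tz_adjoint c). Qed.

Lemma inDPE y : inDP Tzs y <-> inH y /\ defectP y = y.
Proof.
split=> [[hy [h3 h4]] | [hy <-]].
  split => //; apply/funext => i; case: (ord4_cases i) => -> //=.
  move: h3; rewrite Tzs_bshift // => /bshift_eq0 h3.
  by apply/funext => -[|n] //=; rewrite h3.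
split; first exact: inH_defectP.
by split => //=; rewrite Tzs_bshift; [apply/funext | exact: inL2_single].
Qed.

Lemma inDP_defectP y : inH y -> inDP Tzs (defectP y).
Proof. by move=> hy; apply/inDPE; rewrite defectP_idem; split => //; exact: inH_defectP. Qed.

Lemma inDP_E3 w : inDP Tzs (E3 w).
Proof. by apply/inDPE; rewrite defectP_E3; split => //; exact: inH_E3. Qed.

Lemma DP_definite_form : definite_form (inDP Tzs) ipH.
Proof.
have Hf := H_definite_form; have H0 := mem0 Hf.
have defectPB := selfadjoint_additive Hf defectP_selfadjoint.
split.
- by apply/inDPE; split => //; rewrite -E3_0 defectP_E3.
- move=> x y /inDPE[hx ex] /inDPE[hy ey]; apply/inDPE.
  by split; [exact: (memB Hf) | rewrite defectPB // ex ey].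
- by move=> x y z [hx _] [hy _] [hz _]; exact: (ipBl Hf).
- by move=> x y z [hx _] [hy _] [hz _]; exact: (ipBr Hf).
- by move=> x [hx _]; exact: (ip_ge0 Hf).
- by move=> x [hx _]; exact: (ip_eq0 Hf).
Qed.

Lemma Qproj_defectP y : inH y -> Qproj Tzs y = defectP y.
Proof.
move=> hy; apply/funext => i; case: (ord4_cases i) => -> //=.
change (y cmp3 - Tz (Tzs (y cmp3)) = single 0 (y cmp3 0%N)).
by rewrite Tzs_bshift ?sub_Tz_bshift //; exact: hy.
Qed.

Section G1.
Context {alpha : R[i]} {Ns : L2R -> L2R} (hNs : is_adjoint inL2 ipL2 (Nalpha alpha) Ns).

Lemma G1op_Astar x : inH x -> G1op Ns x = Astar alpha x.
Proof.
by move=> hx; rewrite /G1op (adjoint_unique L2_definite_form hNs (Nalpha_adjoint alpha)).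
Qed.

Lemma G1op_adjoint : is_adjoint (inDP Tzs) ipH (G1op Ns) (Aalpha alpha).
Proof.
split=> [y _|x y [hx _] _]; first by rewrite Aalpha_E3; exact: inDP_E3.
by rewrite G1op_Astar // Aalpha_E3 ipH_E3l ipH_E3r ipC2_H1sl.
Qed.

Lemma G1op_contraction : `|alpha| <= 1 ->
  forall x, inDP Tzs x -> ipH (G1op Ns x) (G1op Ns x) <= ipH x x.
Proof.
move=> alpha1 x [hx _]; rewrite G1op_Astar // !ipH_self nH_E3 normC2_H1s lecR.
apply: (le_trans _ (nL2_le_nH _ cmp3 hx)); apply: (le_trans _ (normC2_le_nL2 _ 0 (hx cmp3))).
rewrite /normC2 -[X in X <= _]addr0 lerD ?csq_ge0 //.
by rewrite ler_piMl ?csq_ge0 ?csq_le1.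
Qed.

End G1.
End DefectSpace.
End HSpace.
End Spaces.

(** * The dilation space K' *)

Section KSpace.
Context {R : realType}.
Local Notation L2R := (@L2 R).
Local Notation HsR := (@Hs R).
Local Notation KsR := (@Ks R).
Implicit Types (k : KsR) (h : HsR) (w : L2R).

(* Every D_{P^*}-component d of K' is E3 (d_3 0), so a vector of K' beyond its H-component
   is described by the sequence of these C^2-entries. *)
Definition vK k : L2R := fun n => k n cmp3 0%N.
Definition nK k : R := sumS (fun n => nH (k n)).
Definition E3seq w : KsR := fun n => E3 (w n).

Definition W3E k : KsR := fun n => match n with
  | 0 => Pstar (k 0%N) | 1 => 0 | 2 => defectP (k 0%N) | m.+3 => k m.+1 end.

Lemma vK_E3seq w : vK (E3seq w) = w.
Proof. by []. Qed.

Lemma vK_W3E k : vK (W3E k) = Tz (Tz (vK k)).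
Proof. by apply/funext => -[|[|[|n]]]. Qed.

Lemma W3E_E3seq w : W3E (E3seq w) = E3seq (Tz (Tz w)).
Proof.
apply/funext => -[|[|[|n]]] //; rewrite /E3seq /=.
- by rewrite Pstar_E3 E3_0.
- by rewrite E3_0.
- by rewrite defectP_E3.
Qed.

Lemma ipH_selfE k : (fun n => ipH (k n) (k n)) = fun n => (nH (k n))%:C.
Proof. by apply/funext => n; rewrite ipH_self. Qed.

Lemma ipK_self k : ipK k k = (nK k)%:C.
Proof. by rewrite /ipK ipH_selfE sumC_real. Qed.

Lemma ipK_embK k h : ipK k (embK h) = ipH (k 0%N) h.
Proof.
have h0 n : n != 0%N -> ipH (k n) (embK h n) = 0 by case: n => // n _; exact: ipH_0r.
exact: (cvgC_single h0).2.
Qed.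

Lemma ipK_E3seqr k w : ipK k (E3seq w) = ipL2 (vK k) w.
Proof. by apply: eq_sumC => n; exact: ipH_E3r. Qed.
Lemma ipK_E3seql w k : ipK (E3seq w) k = ipL2 w (vK k).
Proof. by apply: eq_sumC => n; exact: ipH_E3l. Qed.

Section Membership.
Context {Tzs : L2R -> L2R} (hTzs : is_adjoint inL2 ipL2 Tz Tzs).

Lemma inKE k : inK Tzs k <->
  [/\ inH (k 0%N), forall n, inDP Tzs (k n.+1) & cvgS (fun n => nH (k n))].
Proof. by rewrite /inK ipH_selfE; split=> [[h0 [hD /cvgC_real hc]]|[h0 hD /cvgC_real hc]]. Qed.

Lemma inK_inH {k} : inK Tzs k -> forall n, inH (k n).
Proof. by move=> /inKE[h0 hD _] [|n] //; exact: (hD n).1. Qed.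

Lemma inK_embK h : inH h -> inK Tzs (embK h).
Proof.
move=> hh; apply/inKE; split => // [n|]; first exact: (mem0 (DP_definite_form hTzs)).
have h0 n : n != 0%N -> nH (embK h n) = 0 by case: n => // n _; exact: nH_0.
exact: (cvgS_single h0).1.
Qed.

Lemma inL2_vK {k} : inK Tzs k -> inL2 (vK k) /\ nL2 (vK k) <= nK k.
Proof.
move=> /[dup] /inK_inH hk /inKE[_ _ hc].
have le n : normC2 (vK k n) <= nH (k n).
  exact: le_trans (normC2_le_nL2 _ 0 (hk n cmp3)) (nL2_le_nH _ cmp3 (hk n)).
have cv : cvgS (fun n => normC2 (vK k n)).
  by apply: (cvgS_le _ _ le hc) => n; exact: normC2_ge0.
by split; [exact/inL2E | exact: sumS_le].
Qed.

Lemma inK_E3seq {w} : inL2 w -> inK Tzs (E3seq w) /\ nK (E3seq w) = nL2 w.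
Proof.
move=> /inL2E hw.
have e : (fun n => nH (E3seq w n)) = fun n => normC2 (w n).
  by apply/funext => n; exact: nH_E3.
split; last by rewrite /nK e.
by apply/inKE; split => [|n|]; [exact: inH_E3 | exact: (inDP_E3 hTzs) | rewrite e].
Qed.

Lemma inK_W3E {k} : inK Tzs k -> inK Tzs (W3E k) /\ nK (W3E k) = nK k.
Proof.
move=> /[dup] /inK_inH hk /inKE[h0 hD hc].
have hc1 : cvgS (fun n => nH (k n.+1)) := (cvgS_shift _).1 hc.
have hc3 : cvgS (fun n => nH (W3E k n)) by do 3!apply/cvgS_shift.
split.
  apply/inKE; split => [|[|[|n]]|] //.
  - exact: Pop_adjoint.1.
  - exact: (mem0 (DP_definite_form hTzs)).
  - exact: (inDP_defectP hTzs).
  - exact: hD.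
have hc3_2 : cvgS (fun n => nH (W3E k n.+2)) by apply/cvgS_shift.
have hc3_1 : cvgS (fun n => nH (W3E k n.+1)) by do 2!apply/cvgS_shift.
rewrite /nK (sumS_shift _ hc3) (sumS_shift _ hc3_1) (sumS_shift _ hc3_2) (sumS_shift _ hc).
by rewrite /= nH_0 add0r addrA nH_Pstar_defectP.
Qed.

End Membership.
End KSpace.

Section WeightedShift.
Context {R : realType}.
Local Notation C2R := (@C2 R).
Local Notation L2R := (@L2 R).
Local Notation KsR := (@Ks R).
Local Notation o1 := (@Ordinal 2 1 isT).

Variable alpha : R[i].
Implicit Types (k l : KsR) (x y : L2R).

Definition liftC2 (f : C2R -> C2R) x : L2R := fun n => f (x n).

(* The common C^2-coordinate action of W_1 and W_2: (T_z (x) H_1) + (I (x) H_1^* ). *)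
Definition wshift x : L2R := Tz (liftC2 (H1 alpha) x) + liftC2 (H1s alpha) x.

Lemma wshift0 x : wshift x 0%N = H1s alpha (x 0%N).
Proof. exact: add0r. Qed.
Lemma wshiftS x n : wshift x n.+1 = H1 alpha (x n) + H1s alpha (x n.+1).
Proof. by []. Qed.

Lemma wshift_Tz x : wshift (Tz x) = Tz (wshift x).
Proof.
apply/funext => -[|[|n]]; rewrite ?wshift0 ?wshiftS /= ?H1s_0 ?H1_0 ?add0r //.
by rewrite wshift0.
Qed.

Lemma normC2_H1_le v : normC2 (H1 alpha v) <= csq alpha * normC2 v.
Proof. by rewrite normC2_H1 ler_wpM2l ?csq_ge0 // lerDr csq_ge0. Qed.

Lemma normC2_H1s_le v : normC2 (H1s alpha v) <= csq alpha * normC2 v.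
Proof. by rewrite normC2_H1s ler_wpM2l ?csq_ge0 // lerDl csq_ge0. Qed.

Lemma inL2_liftC2 f {x} : (forall v, normC2 (f v) <= csq alpha * normC2 v) ->
  inL2 x -> inL2 (liftC2 f x).
Proof.
move=> hf /inL2E hx; apply/inL2E.
by apply: (cvgS_le _ _ _ (cvgS_scale (csq alpha) hx)) => n; [exact: normC2_ge0 | exact: hf].
Qed.

Lemma inL2_wshift {x} : inL2 x -> inL2 (wshift x).
Proof.
move=> hx; apply: (memD L2_definite_form).
  by apply: inL2_Tz; apply: (inL2_liftC2 _ _ hx); exact: normC2_H1_le.
by apply: (inL2_liftC2 _ _ hx); exact: normC2_H1s_le.
Qed.

(* H_1 reads coordinate 1 of x_(n-1) and H_1^* coordinate 0 of x_n, so every coordinate of x is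
   read once, except coordinate 1 of the last term. *)
Lemma series_wshift x N :
  series (fun n => normC2 (wshift x n)) N.+1 + csq alpha * csq (x N o1)
  = csq alpha * series (fun n => normC2 (x n)) N.+1.
Proof.
elim: N => [|N IH]; first by rewrite !seriesSr !series0 !add0r wshift0 normC2_H1s /normC2; ring.
by rewrite seriesSr [in RHS]seriesSr [in RHS]mulrDr -IH wshiftS normC2_H1_H1s /normC2; ring.
Qed.

Lemma series_wshift_le x N : `|alpha| <= 1 ->
  series (fun n => normC2 (wshift x n)) N <= series (fun n => normC2 (x n)) N.
Proof.
move=> alpha1; case: N => [|N]; first by rewrite !series0.
have := series_wshift x N; have := csq_le1 _ alpha1.
have := csq_ge0 alpha; have := csq_ge0 (x N o1).
have : 0 <= series (fun n => normC2 (x n)) N.+1.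
  by rewrite /series /=; apply: sumr_ge0 => n _; exact: normC2_ge0.
nra.
Qed.

Lemma nL2_wshift_le {x} : `|alpha| <= 1 -> inL2 x -> nL2 (wshift x) <= nL2 x.
Proof.
move=> alpha1 hx; apply: sumS_le_series; [exact/inL2E/inL2_wshift | exact/inL2E |].
by move=> N; exact: series_wshift_le.
Qed.

Lemma ipL2_liftC2_H1 x y : ipL2 (liftC2 (H1 alpha) x) y = ipL2 x (liftC2 (H1s alpha) y).
Proof. by apply: eq_sumC => n; exact: ipC2_H1l. Qed.

Lemma ipL2_liftC2_H1s x y : ipL2 (liftC2 (H1s alpha) x) y = ipL2 x (liftC2 (H1 alpha) y).
Proof. by apply: eq_sumC => n; exact: ipC2_H1sl. Qed.

(* The adjoint relation <W_1 k, l> = <W_3 k, W_2 l> in C^2-coordinates. *)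
Lemma ipL2_wshift x y : inL2 x -> inL2 y -> ipL2 (wshift x) y = ipL2 x (bshift (wshift y)).
Proof.
move=> hx hy; have L2f := @L2_definite_form R.
have hx1 := inL2_liftC2 _ normC2_H1_le hx; have hx2 := inL2_liftC2 _ normC2_H1s_le hx.
have hy1 := inL2_liftC2 _ normC2_H1_le hy; have hy2 := inL2_liftC2 _ normC2_H1s_le hy.
have hy2' : inL2 (bshift (liftC2 (H1s alpha) y)) := (inL2_shift _).1 hy2.
have -> : bshift (wshift y) = liftC2 (H1 alpha) y + bshift (liftC2 (H1s alpha) y) by [].
have hTx1 := inL2_Tz hx1.
rewrite /wshift (ipDl L2f) // (ipDr L2f) //.
by rewrite (Tz_adjoint.2 _ _ hx1 hy) ipL2_liftC2_H1 ipL2_liftC2_H1s addrC.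
Qed.

Definition W1E k : KsR := E3seq (wshift (vK k)).
Definition W2E k : KsR := E3seq (Tz (wshift (vK k))).

Section Explicit.
Context {Tzs : L2R -> L2R} (hTzs : is_adjoint inL2 ipL2 Tz Tzs).
Hypothesis alpha1 : `|alpha| <= 1.

Lemma inK_W1E {k} : inK Tzs k -> inK Tzs (W1E k) /\ nK (W1E k) <= nK k.
Proof.
move=> /inL2_vK[hv le]; have [hW ->] := inK_E3seq hTzs (inL2_wshift hv).
by split=> //; exact: le_trans (nL2_wshift_le alpha1 hv) le.
Qed.

Lemma inK_W2E {k} : inK Tzs k -> inK Tzs (W2E k) /\ nK (W2E k) <= nK k.
Proof.
move=> /inL2_vK[hv le]; have hw := inL2_wshift hv.
have [hW ->] := inK_E3seq hTzs (inL2_Tz hw); rewrite nL2_Tz //.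
by split=> //; exact: le_trans (nL2_wshift_le alpha1 hv) le.
Qed.

Lemma W_commute k :
  [/\ W1E (W2E k) = W2E (W1E k), W1E (W3E k) = W3E (W1E k) & W2E (W3E k) = W3E (W2E k)].
Proof. by rewrite /W1E /W2E !vK_E3seq vK_W3E !W3E_E3seq !wshift_Tz. Qed.

Lemma ipK_W1E_W3E_W2E k l : inK Tzs k -> inK Tzs l -> ipK (W1E k) l = ipK (W3E k) (W2E l).
Proof.
move=> /inL2_vK[hk _] /inL2_vK[hl _]; have hw := inL2_wshift hl.
rewrite ipK_E3seql ipK_E3seqr vK_W3E ipL2_wshift //.
by rewrite (Tz_adjoint.2 _ _ (inL2_Tz hk) (inL2_Tz hw)) (Tz_adjoint.2 _ _ hk hw).
Qed.

Lemma W_explicit_tetrablock_isometry : tetrablock_isometry (inK Tzs) ipK W1E W2E W3E.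
Proof.
split=> [k hk|].
  by split; [|split]; [exact: (inK_W1E hk).1 | exact: (inK_W2E hk).1 | exact: (inK_W3E hTzs hk).1].
split=> [k _|]; first by have [? ? ?] := W_commute k.
split=> [k hk|]; first by rewrite !ipK_self (inK_W3E hTzs hk).2.
split=> [k hk|]; last exact: ipK_W1E_W3E_W2E.
by rewrite !ipK_self !lecR (inK_W1E hk).2 (inK_W2E hk).2.
Qed.

Lemma W_explicit_dilation : tetrablock_isometric_dilation inH ipH (inK Tzs) ipK embK
  (Aalpha alpha) Bop Pop W1E W2E W3E.
Proof.
split; first exact: W_explicit_tetrablock_isometry.
split; first exact: (inK_embK hTzs).
split=> [h h' _ _|k h hk hh]; first exact: ipK_embK.
have hk0 := inK_inH hk 0.
rewrite !ipK_embK; split; last split.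
- by rewrite /W1E /E3seq ipH_E3l wshift0 ipC2_H1sl ipH_E3r.
- by rewrite /W2E /E3seq /= E3_0 ipH_0l ipH_0r.
- have hPk0 := Pop_adjoint.1 _ hk0; have hPh := inH_Pop hh.
  by rewrite /W3E (ipH_conj _ _ hh hPk0) -(Pop_adjoint.2 _ _ hh hk0) (ipH_conj _ _ hPh hk0).
Qed.

End Explicit.
End WeightedShift.

(** * The operators of the theorem *)

Section Realization.
Context {R : realType}.
Local Notation L2R := (@L2 R).
Local Notation HsR := (@Hs R).

Context {alpha : R[i]} {Tzs Ns : L2R -> L2R} {As Ps Dp G1s : HsR -> HsR}.
Hypotheses (hTzs : is_adjoint inL2 ipL2 Tz Tzs)
  (hNs : is_adjoint inL2 ipL2 (Nalpha alpha) Ns)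
  (hAs : is_adjoint inH ipH (Aalpha alpha) As)
  (hPs : is_adjoint inH ipH Pop Ps)
  (hDp : positive_op inH ipH Dp)
  (hDp2 : forall x, inH x -> Dp (Dp x) = x - Pop (Ps x))
  (hG1s : is_adjoint (inDP Tzs) ipH (G1op Ns) G1s).

Lemma Dp_defectP x : inH x -> Dp x = defectP x.
Proof.
apply: (positive_sqrt_projection H_definite_form hDp defectP_selfadjoint) => // y hy.
by rewrite hDp2 // (adjoint_unique H_definite_form hPs Pop_adjoint) // sub_Pop_Pstar.
Qed.

Lemma Qproj_orth_projection : orth_projection_onto inH ipH (Qproj Tzs) (inDP Tzs).
Proof.
have QE := Qproj_defectP hTzs.
split; [split|split].
- by move=> x hx; rewrite QE //; exact: inH_defectP.
- by move=> x y hx hy; rewrite !QE //; exact: defectP_selfadjoint.2.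
- by move=> x hx; rewrite !QE ?defectP_idem //; exact: inH_defectP.
- move=> y; split=> [/[dup] [[hy _]] /(inDPE hTzs)[_ ey]|[x hx <-]].
    by exists y; rewrite ?QE.
  by rewrite QE //; exact: inDP_defectP.
Qed.

Lemma defect_eq_G1 x : inH x -> As x - Bop (Ps x) = Dp (G1op Ns (Dp x)).
Proof.
move=> hx; have hQx := inH_defectP hx.
rewrite /Bop /zeroop subr0 (adjoint_unique H_definite_form hAs (Aalpha_adjoint alpha)) //.
rewrite (Dp_defectP x hx) (G1op_Astar hNs _ hQx) Dp_defectP; last exact: inH_E3.
by rewrite defectP_E3.
Qed.

Lemma defect_eq_G2 x : inH x -> Bop x - Aalpha alpha (Ps x) = Dp (G2op (Dp x)).
Proof.
move=> hx; have h0 := mem0 (@H_definite_form R).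
rewrite /Bop /G2op /zeroop (adjoint_unique H_definite_form hPs Pop_adjoint) // Aalpha_E3.
by rewrite H1_0 E3_0 subrr Dp_defectP // -E3_0 defectP_E3.
Qed.

Lemma G1s_Aalpha y : inDP Tzs y -> G1s y = Aalpha alpha y.
Proof. exact: (adjoint_unique (DP_definite_form hTzs) hG1s (G1op_adjoint hTzs hNs) y). Qed.

Lemma G1s_dprev k n : inK Tzs k -> G1s (dprev Dp k n.+1) = E3 (H1 alpha (vK k n)).
Proof.
move=> hk; have hH := inK_inH hk; have /inKE[_ hD _] := hk.
case: n => [|n] /=; last by rewrite G1s_Aalpha.
by rewrite Dp_defectP // G1s_Aalpha //; exact: inDP_defectP.
Qed.

Lemma W1op_W1E k : inK Tzs k -> W1op As (G1op Ns) G1s Dp k = W1E alpha k.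
Proof.
move=> hk; have hH := inK_inH hk.
apply/funext => -[|n].
  rewrite /W1op (adjoint_unique H_definite_form hAs (Aalpha_adjoint alpha)) //.
  by rewrite /W1E /E3seq wshift0.
by rewrite /W1op G1s_dprev // (G1op_Astar hNs) // -E3_add.
Qed.

Lemma W2op_W2E k : inK Tzs k -> W2op Bop (G1op Ns) G1s Dp k = W2E alpha k.
Proof.
move=> hk; have hH := inK_inH hk.
apply/funext => -[|[|n]]; rewrite /W2E /E3seq /=.
- by rewrite E3_0.
- by rewrite wshift0 Dp_defectP // (G1op_Astar hNs) //; exact: inH_defectP.
- by rewrite -[RHS]/(W1E alpha k n.+1) -W1op_W1E.
Qed.

Lemma W3op_W3E k : inK Tzs k -> W3op Ps Dp k = W3E k.
Proof.
move=> hk; have hH := inK_inH hk.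
apply/funext => -[|[|[|n]]] //=; first exact: (adjoint_unique H_definite_form hPs Pop_adjoint).
exact: Dp_defectP.
Qed.

Lemma W_dilation : `|alpha| <= 1 ->
  tetrablock_isometric_dilation inH ipH (inK Tzs) ipK embK (Aalpha alpha) Bop Pop
    (W1op As (G1op Ns) G1s Dp) (W2op Bop (G1op Ns) G1s Dp) (W3op Ps Dp).
Proof.
move=> alpha1.
apply: (eq_tetrablock_isometric_dilation _ _ _ (W_explicit_dilation alpha hTzs alpha1)).
- exact: W1op_W1E.
- exact: W2op_W2E.
- exact: W3op_W3E.
Qed.

End Realization.

Theorem mainTheorem6 (R : realType) (alpha : R[i]) (halpha : `|alpha| <= 1)
  (* Tzs = T_z^*, Ns = N_alpha^*, As = A_alpha^*, Ps = P^*,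
   Dp = D_{P*} = (I - P P^* )^{1/2} (the positive square root),
   G1s = G1^* (adjoint in B(D_{P*})) *)
  (Tzs Ns : L2 -> L2) (As Ps Dp G1s : Hs -> Hs)
  (hTzs : is_adjoint inL2 ipL2 Tz Tzs)
  (hNs : is_adjoint inL2 ipL2 (Nalpha alpha) Ns)
  (hAs : is_adjoint inH ipH (Aalpha alpha) As)
  (hPs : is_adjoint inH ipH Pop Ps)
  (hDp : positive_op inH ipH Dp)
  (hDp2 : forall x, inH x -> Dp (Dp x) = x - Pop (Ps x))
  (hG1s : is_adjoint (inDP Tzs) ipH (G1op Ns) G1s) :
  (* D_{P*} = I (+) I (+) (I - T_z T_z^* ) (+) 0, the orthogonal projection
     onto l2(C^2) (+) l2(C^2) (+) ker T_z^* (+) {0} *)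
  (forall x, inH x -> Dp x = Qproj Tzs x) /\
  orth_projection_onto inH ipH (Qproj Tzs) (inDP Tzs) /\
  (* G1 is a bounded operator on D_{P*} *)
  (forall x, inDP Tzs x -> inDP Tzs (G1op Ns x)) /\
  (exists M : R, forall x, inDP Tzs x ->
     ipH (G1op Ns x) (G1op Ns x) <= M%:C * ipH x x) /\
  (* A^* - B P^* = D G1 D  and  B^* - A P^* = D G2 D *)
  (forall x, inH x -> As x - Bop (Ps x) = Dp (G1op Ns (Dp x))) /\
  (forall x, inH x -> Bop x - Aalpha alpha (Ps x) = Dp (G2op (Dp x))) /\
  (* (W1, W2, W3) is a tetrablock isometric dilation of (A^*, B^*, P^* ),
     the adjoints of A^*, B^*, P^* are A, B = 0, P *)
  tetrablock_isometric_dilation inH ipH (inK Tzs) ipK embK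
    (Aalpha alpha) Bop Pop
    (W1op As (G1op Ns) G1s Dp)
    (W2op Bop (G1op Ns) G1s Dp)
    (W3op Ps Dp).
Proof.
split; first by move=> x hx; rewrite (Dp_defectP hPs hDp hDp2) // (Qproj_defectP hTzs).
split; first exact: (Qproj_orth_projection hTzs).
split; first by move=> x [hx _]; rewrite (G1op_Astar hNs) //; exact: (inDP_E3 hTzs).
split; first by exists 1 => x hx; rewrite rmorph1 mul1r; exact: (G1op_contraction hNs halpha x hx).
split; first exact: (defect_eq_G1 hNs hAs hPs hDp hDp2).
split; first exact: (defect_eq_G2 hPs hDp hDp2).
exact: (W_dilation hTzs hNs hAs hPs hDp hDp2 hG1s).
Qed.
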